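(* Let $P$ be a finite poset and $f\colon\mathcal{J}(P)\to\mathbb{R}$ a real-valued statistic such that $f\equiv^q c(q)$ for some $c(q)\in\mathbb{R}(q)$. Then for any positive integers $r,s$ and any cyclic permutation $\theta$ of $\mathbf{F}_0\cup\mathbf{F}_1$, the statistic $f\colon\mathcal{J}_{r,s}(P)\to\mathbb{R}$ is $c(r/s)$-mesic under the $q$-rowmotion operator $\rho\colon\mathcal{J}_{r,s}(P)\to\mathcal{J}_{r,s}(P)$.
   Context: $\mathcal{J}(P)$ is the set of order ideals of $P$. For $p\in P$, $I\in\mathcal{J}(P)$: $T_p^+(I)=1$ if $p$ is minimal in $P\setminus I$, else $0$; $T_p^-(I)=1$ if $p$ is maximal in $I$, else $0$; $T_p^q=T_p^+-qT_p^-$ with $q$ an indeterminate. For $f,g\colon\mathcal{J}(P)\to\mathbb{R}(q)$, $f\equiv^q g$ means $f-g=\sum_{p\in P}c_p(q)T_p^q$ for some $c_p(q)\in\mathbb{R}(q)$; an element of $\mathbb{R}(q)$ denotes the corresponding constant function. $\mathbf{F}_0,\mathbf{F}_1$ are disjoint sets of sizes $s$ and $r$; $\theta$ is a single $(r+s)$-cycle on $\mathbf{F}_0\cup\mathbf{F}_1$. $\mathcal{J}_{r,s}(P)$ is the set of labelings $L\colon P\to\mathbf{F}_0\cup\mathbf{F}_1$ with $L^{-1}(\mathbf{F}_0)$ an order ideal. $x$ is active in $L$ if it is maximal in $L^{-1}(\mathbf{F}_0)$ or minimal in $L^{-1}(\mathbf{F}_1)$; the toggle $\tau_p$ replaces $L(p)$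 by $\theta(L(p))$ if $p$ is active and otherwise does nothing; $\rho=\tau_{p_1}\circ\cdots\circ\tau_{p_n}$ for a linear extension $p_1,\dots,p_n$ of $P$. A statistic $g$ on $\mathcal{J}(P)$ is viewed on $\mathcal{J}_{r,s}(P)$ via $g(L)=g(L^{-1}(\mathbf{F}_0))$. A statistic is $c$-mesic if its average over every orbit equals $c$. *)

From HB Require Import structures.
From mathcomp Require Import all_boot all_order all_algebra all_fingroup.
From mathcomp Require Import fraction.
From mathcomp Require Import reals.
Set Implicit Arguments. Unset Strict Implicit. Unset Printing Implicit Defensive.
Import Order.TTheory GRing.Theory Num.Theory.
Local Open Scope ring_scope.

Notation "x %:F" := (@FracField.tofrac _ x) : ring_scope.

Section Defs.
Variables (d : Order.disp_t) (P : finPOrderType d).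

Definition order_ideal (I : {set P}) : bool :=
  [forall x, forall y, ((x \in I) && (y <= x)%O) ==> (y \in I)].

Definition Tplus (p : P) (I : {set P}) : bool :=
  (p \in ~: I) && [forall y, (y \in ~: I) ==> ~~ (y < p)%O].
Definition Tminus (p : P) (I : {set P}) : bool :=
  (p \in I) && [forall y, (y \in I) ==> ~~ (p < y)%O].

Variable R : realType.
Notation RQ := {fraction {poly R}}.

Definition Tq (p : P) (I : {set P}) : RQ :=
  (Tplus p I : nat)%:R - (('X : {poly R})%:F) * (Tminus p I : nat)%:R.

Definition qequiv (g : {set P} -> RQ) (c : RQ) : Prop :=
  exists cp : P -> RQ,
    forall I, order_ideal I -> g I - c = \sum_(p : P) cp p * Tq p I.

Definition linear_extension (ext : seq P) : Prop :=
  [/\ uniq ext, forall x, x \in ext &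
      forall x y, (x < y)%O -> (index x ext < index y ext)%N].
End Defs.

Definition frac_eval (R : realType) (c : {fraction {poly R}}) (x v : R) : Prop :=
  exists n den : {poly R},
    [/\ den.[x] != 0, c = n%:F / den%:F & v = n.[x] / den.[x]].

(* labels: F_0 = 'I_s (left summand), F_1 = 'I_r (right summand) *)
Definition Lab (s r : nat) : finType := ('I_s + 'I_r)%type.
Definition inF0 (s r : nat) (l : Lab s r) : bool :=
  if l is inl _ then true else false.

Definition full_cycle (T : finType) (theta : {perm T}) : Prop :=
  forall x, porbit theta x = [set: T].

Section Labelings.
Variables (d : Order.disp_t) (P : finPOrderType d) (s r : nat).
Variable theta : {perm Lab s r}.
Notation labeling := {ffun P -> Lab s r}.

Definition zeroset (L : labeling) : {set P} := [set p | inF0 (L p)].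

Definition rs_labeling (L : labeling) : bool := order_ideal (zeroset L).

Definition active (L : labeling) (x : P) : bool :=
  ((x \in zeroset L) && [forall y, (y \in zeroset L) ==> ~~ (x < y)%O])
  || ((x \notin zeroset L) && [forall y, (y \notin zeroset L) ==> ~~ (y < x)%O]).

Definition toggle (p : P) (L : labeling) : labeling :=
  if active L p then [ffun x => if x == p then theta (L p) else L x] else L.

Definition qrowmotion (ext : seq P) : labeling -> labeling :=
  foldr (fun p g => toggle p \o g) id ext.
End Labelings.

Definition mesic (R : realType) (T : finType) (D : pred T) (rho : T -> T)
    (g : T -> R) (c : R) : Prop :=
  forall x, D x ->
    (\sum_(y <- fingraph.orbit rho x) g y) / (size (fingraph.orbit rho x))%:R = c.

(* In a rowmotion the elements above p are toggled before p and those below it after, so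
   T_p^+ holds exactly at the steps where p is toggled away from a label in F_1, and T_p^- right
   after the steps where p is toggled to a label in F_0.  Along an orbit the label of p makes
   whole turns of the (r+s)-cycle theta, leaving every label equally often, hence
   s * #T_p^+ = r * #T_p^- over each orbit.  Summing f - c = sum_p c_p(q) T_p^q over an orbit
   of size n gives sum f - n c(q) = sum_p c_p(q) (#T_p^+ - q #T_p^-), which vanishes at q = r/s.
   Evaluating at r/s is legitimate because c and every c_p are regular at each q > 0: with
   weights q^|P \ I|, the bijection I |-> I u {p} makes sum_I q^|P \ I| T_p^q(I) vanish, both
   over J(P) and over the ideals avoiding any other element, and this writes c and each c_p as
   quotients by polynomials that are positive for q > 0. *)

From HB Require Import structures.
From mathcomp Require Import all_boot all_order all_algebra all_fingroup.
From mathcomp Require Import fraction reals.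
Set Implicit Arguments. Unset Strict Implicit. Unset Printing Implicit Defensive.
Import Order.TTheory GRing.Theory Num.Theory.
Local Open Scope ring_scope.

Lemma sum_shift_periodic n (g : nat -> nat) :
  g n = g 0 -> (\sum_(i < n) g i.+1 = \sum_(i < n) g i)%N.
Proof.
case: n => [|n] gn; first by rewrite !big_ord0.
by rewrite big_ord_recr big_ord_recl /= gn addnC.
Qed.

Lemma count_traject (T : Type) (f : T -> T) (a : pred T) x n :
  count a (traject f x n) = (\sum_(i < n) a (iter i f x))%N.
Proof.
elim: n x => [|n IH] x; first by rewrite big_ord0.
rewrite big_ord_recl /= IH; congr (_ + _)%N.
by apply: eq_bigr => i _; rewrite add0n -iterS iterSr.
Qed.

(** * Evaluating rational functions at a point *)

Section FracEval.
Variables (R : realType) (x : R).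
Notation RQ := {fraction {poly R}}.

Lemma frac_eval_poly (p : {poly R}) : frac_eval p%:F x p.[x].
Proof. by exists p, 1; rewrite hornerC rmorph1 !divr1 oner_neq0. Qed.

Lemma tofrac_neq0_of_horner (den : {poly R}) : den.[x] != 0 -> den%:F != 0 :> RQ.
Proof. by apply: contra_neq => /eqP; rewrite tofrac_eq0 => /eqP ->; rewrite horner0. Qed.

Lemma frac_evalD (g h : RQ) (u v : R) :
  frac_eval g x u -> frac_eval h x v -> frac_eval (g + h) x (u + v).
Proof.
move=> [n1 [d1 [d1x -> ->]]] [n2 [d2 [d2x -> ->]]].
exists (n1 * d2 + n2 * d1), (d1 * d2); split.
- by rewrite hornerM mulf_neq0.
- by rewrite addf_div ?tofrac_neq0_of_horner // !rmorphD !rmorphM.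
- by rewrite addf_div // hornerD !hornerM.
Qed.

Lemma frac_evalN (g : RQ) (u : R) : frac_eval g x u -> frac_eval (- g) x (- u).
Proof.
move=> [n [den [dx -> ->]]]; exists (- n), den; split => //.
- by rewrite rmorphN mulNr.
- by rewrite hornerN mulNr.
Qed.

Lemma frac_evalM (g h : RQ) (u v : R) :
  frac_eval g x u -> frac_eval h x v -> frac_eval (g * h) x (u * v).
Proof.
move=> [n1 [d1 [d1x -> ->]]] [n2 [d2 [d2x -> ->]]].
exists (n1 * n2), (d1 * d2); split.
- by rewrite hornerM mulf_neq0.
- by rewrite mulf_div !rmorphM.
- by rewrite mulf_div !hornerM.
Qed.

Lemma frac_eval_sum (I : Type) (r : seq I) (S : pred I) (F : I -> RQ) (v : I -> R) :
  (forall i, S i -> frac_eval (F i) x (v i)) ->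
  frac_eval (\sum_(i <- r | S i) F i) x (\sum_(i <- r | S i) v i).
Proof.
apply: (big_ind2 (fun g u => frac_eval g x u)) => [|g1 u1 g2 u2]; last exact: frac_evalD.
by rewrite -(horner0 x) -tofrac0; exact: frac_eval_poly.
Qed.

Lemma frac_eval_divr (g : RQ) (den : {poly R}) (v : R) : den.[x] != 0 ->
  frac_eval (g * den%:F) x v -> frac_eval g x (v / den.[x]).
Proof.
move=> dx [n [d1 [d1x gE ->]]]; exists n, (d1 * den); split.
- by rewrite hornerM mulf_neq0.
- by rewrite rmorphM invfM mulrA -gE mulfK ?tofrac_neq0_of_horner.
- by rewrite hornerM invfM mulrA.
Qed.

Lemma frac_eval_unique (g : RQ) (u v : R) :
  frac_eval g x u -> frac_eval g x v -> u = v.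
Proof.
move=> [n1 [d1 [d1x -> ->]]] [n2 [d2 [d2x /eqP + ->]]].
rewrite eqr_div ?tofrac_neq0_of_horner // -!rmorphM tofrac_eq => /eqP nE.
by apply/eqP; rewrite eqr_div // -!hornerM nE.
Qed.

End FracEval.

(** * Label changes along a cycle of theta *)

Section CyclicLabels.
Variables (s r : nat) (theta : {perm Lab s r}).
Hypothesis theta_cycle : full_cycle theta.
Variables (n : nat) (l : nat -> Lab s r) (e : nat -> bool).
Hypothesis l_step : forall i, l i.+1 = if e i then theta (l i) else l i.
Hypothesis l_period : l n = l 0.

Let advances (z : Lab s r) := (\sum_(i < n) (e i && (l i == z)))%N.

Lemma advances_perm z : advances (theta z) = advances z.
Proof.
have arrivals w : (\sum_(i < n) (e i && (theta (l i) == w)))%N = advances w.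
  have := @sum_shift_periodic n (fun i => nat_of_bool (l i == w)).
  rewrite /= l_period => /(_ erefl).
  rewrite (eq_bigr (fun i : 'I_n => (e i && (theta (l i) == w)) + (~~ e i && (l i == w))))%N;
    last by move=> i _; rewrite l_step; case: (e i); rewrite /= ?addn0.
  rewrite [in RHS](eq_bigr (fun i : 'I_n => (e i && (l i == w)) + (~~ e i && (l i == w))))%N;
    last by move=> i _; case: (e i); rewrite /= ?addn0.
  by rewrite !big_split /= => /addIn.
by rewrite -arrivals; apply: eq_bigr => i _; rewrite (inj_eq perm_inj).
Qed.

Lemma advances_const z z' : advances z' = advances z.
Proof.
have : z' \in porbit theta z by rewrite theta_cycle inE.
rewrite porbit_traject => /trajectP [k _ ->].
by elim: k => [//|k IH]; rewrite iterS advances_perm.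
Qed.

Lemma sum_by_label (h : Lab s r -> nat) :
  (\sum_(i < n) e i * h (l i) = \sum_(z : Lab s r) h z * advances z)%N.
Proof.
under [RHS]eq_bigr do rewrite big_distrr /=.
rewrite exchange_big /=; apply: eq_bigr => i _.
rewrite (bigD1 (l i)) //= eqxx andbT mulnC big1 ?addn0 // => z /negbTE.
by rewrite eq_sym => ->; rewrite andbF muln0.
Qed.

Lemma departures_arrivals_balance :
  (s * \sum_(i < n) (e i && ~~ inF0 (l i)) = r * \sum_(i < n) (e i && inF0 (l i.+1)))%N.
Proof.
have count_by_label (h : Lab s r -> bool) :
    (\sum_(i < n) (e i && h (l i)) = (\sum_(z : Lab s r) h z) * advances (l 0))%N.
  rewrite (eq_bigr (fun i : 'I_n => e i * h (l i))%N) => [|i _]; last by rewrite mulnb.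
  rewrite (sum_by_label (fun z => nat_of_bool (h z))) big_distrl.
  by apply: eq_bigr => z _; rewrite (advances_const (l 0)).
have -> : (\sum_(i < n) (e i && inF0 (l i.+1)) = \sum_(i < n) (e i && inF0 (theta (l i))))%N.
  by apply: eq_bigr => i _; rewrite l_step; case: (e i).
rewrite (count_by_label (fun z => ~~ inF0 z)) (count_by_label (fun z => inF0 (theta z))).
rewrite [X in (_ = r * (X * _))%N](reindex_perm theta^-1) /=.
under [X in (_ = r * (X * _))%N]eq_bigr do rewrite permKV.
by rewrite !big_sumType /= !sum_nat_const !card_ord !muln0 !muln1 addn0 mulnCA.
Qed.
End CyclicLabels.

(** * Order ideals, toggles and q-rowmotion *)

Section OrderIdeals.
Variables (d : Order.disp_t) (P : finPOrderType d).

Lemma order_idealP (I : {set P}) :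
  reflect (forall x y, x \in I -> (y <= x)%O -> y \in I) (order_ideal I).
Proof.
apply: (iffP forallP) => [idI x y xI yx | idI x].
  by move: (idI x) => /forallP /(_ y); rewrite xI yx.
by apply/forallP => y; apply/implyP => /andP [xI yx]; exact: idI xI yx.
Qed.

Lemma order_ideal_setT : order_ideal [set: P].
Proof. by apply/order_idealP => y z; rewrite !inE. Qed.

Lemma order_ideal_setU1 (p : P) (I : {set P}) : p \notin I ->
  order_ideal (p |: I) && Tminus p (p |: I) = order_ideal I && Tplus p I.
Proof.
move=> pI; apply/idP/idP.
  case/andP=> /order_idealP idU /andP [_ /forallP pmax].
  rewrite /Tplus inE pI; apply/and3P; split => //.
    apply/order_idealP => y z yI zy.
    have [zp|//] := setU1P (idU y z (setU1r p yI) zy).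
    case/negP: (implyP (pmax y) (setU1r p yI)); rewrite lt_def -zp zy andbT.
    by apply: contraNneq pI => yz; rewrite -zp -yz.
  apply/forallP => y; rewrite inE; apply/implyP/contra => yp.
  have /setU1P [yp'|//] := idU p y (setU11 p I) (ltW yp).
  by move: yp; rewrite yp' ltxx.
case/andP=> /order_idealP idI /andP [_ /forallP pmin].
apply/andP; split.
  apply/order_idealP => y z /setU1P [->|yI] zy; last exact/setU1r/(idI y z yI zy).
  have [->|zp] := eqVneq z p; first exact: setU11.
  by apply/setU1r; move: (pmin z); rewrite inE lt_neqAle zp zy implybF negbK.
rewrite /Tminus setU11; apply/forallP => y; apply/implyP => /setU1P [->|yI].
  by rewrite ltxx.
by apply: contraNN pI => py; exact: idI y p yI (ltW py).
Qed.

End OrderIdeals.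

Section Toggles.
Variables (d : Order.disp_t) (P : finPOrderType d) (s r : nat).
Variable theta : {perm Lab s r}.
Notation labeling := {ffun P -> Lab s r}.
Notation toggle := (@toggle d P s r theta).
Notation rho := (@qrowmotion d P s r theta).
Notation rs := (@rs_labeling d P s r).

Lemma in_zeroset (L : labeling) x : (x \in zeroset L) = inF0 (L x).
Proof. by rewrite inE. Qed.

Lemma activeE (L : labeling) x : active L x =
  if x \in zeroset L then [forall y, (y \in zeroset L) ==> ~~ (x < y)%O]
  else [forall y, (y \notin zeroset L) ==> ~~ (y < x)%O].
Proof. by rewrite /active; case: (x \in zeroset L); rewrite ?orbF. Qed.

Lemma toggle_neq p (L : labeling) y : y != p -> toggle p L y = L y.
Proof. by move=> /negbTE yp; rewrite /toggle; case: ifP => // _; rewrite ffunE yp. Qed.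

Lemma toggle_eq p (L : labeling) :
  toggle p L p = if active L p then theta (L p) else L p.
Proof. by rewrite /toggle; case: ifP => // _; rewrite ffunE eqxx. Qed.

Lemma zeroset_toggle_neq p (L : labeling) y : y != p ->
  (y \in zeroset (toggle p L)) = (y \in zeroset L).
Proof. by move=> yp; rewrite !in_zeroset toggle_neq. Qed.

Lemma rs_toggle p (L : labeling) : rs L -> rs (toggle p L).
Proof.
move=> /order_idealP idL; apply/order_idealP => x y.
case act: (active L p); last by rewrite /toggle act; exact: idL.
have [->|yp] := eqVneq y p.
  have [->//|xp] := eqVneq x p.
  rewrite zeroset_toggle_neq // => xI px.
  move: act; rewrite activeE (idL _ _ xI px) => /forallP /(_ x).
  by rewrite xI lt_def px xp.
rewrite (zeroset_toggle_neq L yp).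
have [->|xp] := eqVneq x p; last by rewrite zeroset_toggle_neq //; exact: idL.
move=> _ yp'; move: act; rewrite activeE; case: ifP => [pI _|_].
  exact: idL _ _ pI yp'.
by move=> /forallP /(_ y); rewrite lt_neqAle yp yp' implybF negbK.
Qed.

Lemma active_toggle p (L : labeling) : rs L ->
  active (toggle p L) p = active L p.
Proof.
move=> /order_idealP idL; case act: (active L p); last by rewrite /toggle act.
have neq_of_lt y : (p < y)%O || (y < p)%O -> y != p.
  by apply: contraTneq => ->; rewrite ltxx.
move: act; rewrite !activeE; case: ifP => pI; case: ifP => pI' /forallP act;
  apply/forallP => y; apply/implyP => yI; apply/negP => ltyp;
  move: yI; rewrite zeroset_toggle_neq ?neq_of_lt ?ltyp ?orbT // => yI.
- by move: (act y); rewrite yI ltyp.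
- by move: yI; rewrite (idL _ _ pI (ltW ltyp)).
- by move: pI; rewrite (idL _ _ yI (ltW ltyp)).
- by move: (act y); rewrite yI ltyp.
Qed.

Lemma toggle_inj p : {in [pred L | rs L] &, injective (toggle p)}.
Proof.
move=> L1 L2 rs1 rs2 eqL.
have act12 : active L1 p = active L2 p.
  by rewrite -(active_toggle p rs1) -(active_toggle p rs2) eqL.
apply/ffunP => y; have [->|yp] := eqVneq y p.
  move: (congr1 (fun L : labeling => L p) eqL); rewrite !toggle_eq act12.
  by case: (active L2 p) => // /perm_inj.
by rewrite -(toggle_neq L1 yp) -(toggle_neq L2 yp) eqL.
Qed.

Lemma qrowmotion_cat s1 s2 L : rho (s1 ++ s2) L = rho s1 (rho s2 L).
Proof. by elim: s1 => //= p s1 IH; rewrite -IH. Qed.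

Lemma rs_qrowmotion ext L : rs L -> rs (rho ext L).
Proof. by elim: ext => //= p ext IH /IH; exact: rs_toggle. Qed.

Lemma rs_iter_qrowmotion ext L i : rs L -> rs (iter i (rho ext) L).
Proof. by move=> rsL; elim: i => //= i IH; exact: rs_qrowmotion. Qed.

Lemma qrowmotion_inj ext : {in [pred L | rs L] &, injective (rho ext)}.
Proof.
elim: ext => //= p ext IH L1 L2 rs1 rs2 eqL.
apply: IH => //; apply: (toggle_inj _ _ eqL); rewrite inE; exact: rs_qrowmotion.
Qed.

Lemma qrowmotion_notin ext L y : y \notin ext -> rho ext L y = L y.
Proof.
elim: ext => //= p ext IH; rewrite inE negb_or => /andP [yp yext].
by rewrite toggle_neq // IH.
Qed.
End Toggles.

Section ToggleInsideRowmotion.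
Variables (d : Order.disp_t) (P : finPOrderType d) (s r : nat).
Variable theta : {perm Lab s r}.
Notation toggle := (@toggle d P s r theta).
Notation rho := (@qrowmotion d P s r theta).
Variables (pre post : seq P) (p : P) (L : {ffun P -> Lab s r}).
Hypothesis rsL : rs_labeling L.
Hypothesis p_notin : (p \notin pre) && (p \notin post).
Hypothesis below_notin_post : forall y, (y < p)%O -> y \notin post.
Hypothesis above_notin_pre : forall y, (p < y)%O -> y \notin pre.

(* [rho] applies the toggles from the end of the list, so [M] is the labeling just before
   [p] is toggled. *)
Let M := rho post L.
Let L' := rho (pre ++ p :: post) L.

Lemma qrowmotion_split : L' = rho pre (toggle p M).
Proof. by rewrite /L' qrowmotion_cat. Qed.

Lemma before_toggle_eq : M p = L p.
Proof. by apply: qrowmotion_notin; case/andP: p_notin. Qed.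

Lemma qrowmotion_at_p : L' p = if active M p then theta (L p) else L p.
Proof.
rewrite qrowmotion_split qrowmotion_notin ?toggle_eq ?before_toggle_eq //.
by case/andP: p_notin.
Qed.

Lemma Tplus_active_F1 : Tplus p (zeroset L) = active M p && ~~ inF0 (L p).
Proof.
have [Lp|Lp] := boolP (inF0 (L p)); first by rewrite andbF /Tplus inE in_zeroset Lp.
rewrite andbT activeE in_zeroset before_toggle_eq (negbTE Lp).
rewrite /Tplus inE in_zeroset Lp /=; apply: eq_forallb => y.
case: (boolP (y < p)%O) => [/below_notin_post yp|]; last by rewrite !implybT.
by rewrite !inE qrowmotion_notin.
Qed.

Lemma Tminus_active_F0 : Tminus p (zeroset L') = active M p && inF0 (L' p).
Proof.
have L'_above y : (p < y)%O -> L' y = M y.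
  move=> py; rewrite qrowmotion_split qrowmotion_notin ?above_notin_pre //.
  by rewrite toggle_neq //; apply: contraTneq py => ->; rewrite ltxx.
have [L'p|L'p] := boolP (inF0 (L' p)); last first.
  by rewrite andbF /Tminus in_zeroset (negbTE L'p).
rewrite andbT /Tminus in_zeroset L'p /=.
case: (boolP (inF0 (L p))) => Lp.
  rewrite activeE in_zeroset before_toggle_eq Lp; apply: eq_forallb => y.
  case: (boolP (p < y)%O) => [py|]; last by rewrite !implybT.
  by rewrite !in_zeroset L'_above.
have act : active M p.
  by apply: contraLR L'p => inact; rewrite qrowmotion_at_p (negbTE inact).
rewrite act; apply/forallP => y; apply/implyP => yI; apply: contraL Lp => py.
move: yI; rewrite in_zeroset L'_above // -in_zeroset => yI.
have /order_idealP/(_ _ _ yI (ltW py)) := rs_qrowmotion theta post rsL.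
by rewrite in_zeroset before_toggle_eq negbK.
Qed.

End ToggleInsideRowmotion.

Lemma linear_extension_split (d : Order.disp_t) (P : finPOrderType d)
    (pre post : seq P) p :
  linear_extension (pre ++ p :: post) ->
  [/\ (p \notin pre) && (p \notin post),
      forall y, (y < p)%O -> y \notin post & forall y, (p < y)%O -> y \notin pre].
Proof.
case=> uext _ lin; move: (uext); rewrite cat_uniq /= negb_or.
case/and3P=> _ /andP [ppre /hasPn post_notin_pre] /andP [ppost _].
have ip : index p (pre ++ p :: post) = size pre.
  by rewrite index_cat (negbTE ppre) /= eqxx addn0.
split; first by rewrite ppre.
- move=> y /lin; rewrite ip index_cat; case: ifP => [ypre _|]; last first.
    by rewrite ltnNge leq_addr.
  by apply: contraL ypre => /post_notin_pre.
- move=> y /lin; rewrite ip index_cat; case: ifP => // ypre.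
  by rewrite ltnNge ltnW // index_mem.
Qed.

Section OrbitBalance.
Variables (d : Order.disp_t) (P : finPOrderType d) (s r : nat).
Variable theta : {perm Lab s r}.
Hypothesis theta_cycle : full_cycle theta.
Notation rho := (@qrowmotion d P s r theta).

Lemma qrowmotion_orbit_balance (ext : seq P) L p :
  linear_extension ext -> rs_labeling L ->
  let O := fingraph.orbit (rho ext) L in
  (s * count (fun L => Tplus p (zeroset L)) O =
   r * count (fun L => Tminus p (zeroset L)) O)%N.
Proof.
move=> lin_ext rsL; case: (lin_ext) => _ /(_ p) pext _.
case/splitPr: pext lin_ext => pre post lin_ext /=.
have [p_notin below above] := linear_extension_split lin_ext.
set rho_ext := rho (pre ++ p :: post); set n := fingraph.order rho_ext L.
have rs_iter i := rs_iter_qrowmotion theta (pre ++ p :: post) i rsL.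
have iter_order : iter n rho_ext L = L.
  apply: (@iter_order_in _ _ [pred L | rs_labeling L]) => //.
  - by move=> L0; rewrite !inE; exact: rs_qrowmotion.
  - exact: qrowmotion_inj.
pose l i := iter i rho_ext L p.
pose e i := active (rho post (iter i rho_ext L)) p.
have l_step i : l i.+1 = if e i then theta (l i) else l i.
  by rewrite /l iterS qrowmotion_at_p.
have Tplus_count : (\sum_(i < n) Tplus p (zeroset (iter i rho_ext L)) =
                    \sum_(i < n) (e i && ~~ inF0 (l i)))%N.
  by apply: eq_bigr => i _; rewrite (Tplus_active_F1 theta _ p_notin below).
have Tminus_count : (\sum_(i < n) Tminus p (zeroset (iter i rho_ext L)) =
                     \sum_(i < n) (e i && inF0 (l i.+1)))%N.
  rewrite -(@sum_shift_periodic n (fun i => Tminus p (zeroset (iter i rho_ext L))));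
    last by rewrite iter_order.
  by apply: eq_bigr => i _; rewrite (Tminus_active_F0 theta (rs_iter i) p_notin above).
rewrite /fingraph.orbit !count_traject -/n Tplus_count Tminus_count.
apply: (departures_arrivals_balance (n := n) theta_cycle l_step).
by rewrite /l iter_order.
Qed.
End OrbitBalance.

(** * Weighted sums over order ideals *)

Section Weights.
Variables (R : realType) (d : Order.disp_t) (P : finPOrderType d).
Notation RQ := {fraction {poly R}}.

Definition wt (I : {set P}) : {poly R} := 'X^#|~: I|.

Lemma wt_setU1 (p : P) (I : {set P}) : p \notin I -> wt (p |: I) * 'X = wt I.
Proof.
move=> pI; rewrite /wt -exprSr (cardsD1 p (~: I)) inE pI add1n; congr (_ ^+ _.+1).
by apply: eq_card => y; rewrite !inE negb_or andbC.
Qed.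

Lemma sum_mul_indicator (A : pred {set P}) (b : {set P} -> bool) (F : {set P} -> RQ) :
  \sum_(I | A I) F I * (b I)%:R = \sum_(I | A I && b I) F I.
Proof.
by rewrite big_mkcondr; apply: eq_bigr => I _; case: (b I); rewrite ?mulr1 ?mulr0.
Qed.

Lemma sum_wt_Tq_eq0 (p : P) (Q : pred {set P}) :
  (forall I : {set P}, p \notin I -> Q (p |: I) = Q I) ->
  \sum_(I | order_ideal I && Q I) (wt I)%:F * Tq R p I = 0.
Proof.
move=> QU; rewrite /Tq.
under eq_bigr do rewrite mulrBr mulrA.
rewrite sumrB !sum_mul_indicator.
(* [I |-> p |: I] maps the ideals with [T_p^+] onto those with [T_p^-],
   dividing the weight by [q]. *)
rewrite [X in _ - X](reindex_onto (fun I : {set P} => p |: I) (fun I : {set P} => I :\ p));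
  last first.
  by move=> I /andP [_ /andP [pI _]]; rewrite setD1K.
rewrite [X in _ - X](eq_big (fun I => order_ideal I && Q I && Tplus p I) (fun I => (wt I)%:F)).
- by rewrite subrr.
- move=> I; have [pI|pI] := boolP (p \in I).
    have -> : ((p |: I) :\ p == I) = false.
      by apply/negbTE/eqP => eI; move: pI; rewrite -eI setD11.
    by rewrite /Tplus inE pI !andbF.
  rewrite setU1K // eqxx andbT QU //.
  by case: (Q I); rewrite ?andbF ?andbT // order_ideal_setU1.
- move=> I /andP [_ /eqP eI].
  have pI : p \notin I by rewrite -eI setD11.
  by rewrite -rmorphM wt_setU1.
Qed.

Lemma sum_wt_Tq_notin (p : P) :
  \sum_(I | order_ideal I && (p \notin I)) (wt I)%:F * Tq R p I =
  (\sum_(I | order_ideal I && Tplus p I) wt I)%:F.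
Proof.
rewrite rmorph_sum /Tq.
under eq_bigr => I /andP [_ pI] do rewrite /Tminus (negbTE pI) mulr0 subr0.
rewrite sum_mul_indicator; apply: eq_bigl => I; rewrite -andbA /Tplus inE.
by case: (p \in I).
Qed.

Lemma horner_sum_wt_gt0 (x : R) (A : pred {set P}) (I0 : {set P}) : 0 < x -> A I0 ->
  0 < (\sum_(I | A I) wt I).[x].
Proof.
move=> x_gt0 AI0; rewrite horner_sum (bigD1 I0) //= hornerXn.
by rewrite ltr_wpDr ?exprn_gt0 // sumr_ge0 // => I _; rewrite hornerXn exprn_ge0 // ltW.
Qed.

Lemma sum_Tq_count (O : seq {set P}) (p : P) :
  \sum_(I <- O) Tq R p I = ((count (Tplus p) O)%:R - 'X * (count (Tminus p) O)%:R)%:F.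
Proof.
have sum_count (a : pred {set P}) : (\sum_(I <- O) a I)%N = count a O.
  by rewrite -sum1_count [RHS]big_mkcond.
by rewrite /Tq sumrB -mulr_sumr -!natr_sum !sum_count rmorphB rmorphM !rmorph_nat.
Qed.
End Weights.

Section QEquivalence.
Variables (R : realType) (d : Order.disp_t) (P : finPOrderType d).
Notation RQ := {fraction {poly R}}.
Variables (g : {set P} -> RQ) (c : RQ) (cp : P -> RQ).
Hypothesis g_qequiv : forall I, order_ideal I -> g I - c = \sum_(p : P) cp p * Tq R p I.

Lemma qequiv_weighted_sum (T : eqType) (ts : seq T) (S : pred T) (h : T -> {set P})
    (w : T -> RQ) :
  {in ts, forall t, S t -> order_ideal (h t)} ->
  \sum_(t <- ts | S t) w t * g (h t) - c * \sum_(t <- ts | S t) w t =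
  \sum_(p : P) cp p * \sum_(t <- ts | S t) w t * Tq R p (h t).
Proof.
move=> ideal_h; rewrite mulr_sumr -sumrB big_seq_cond.
under [RHS]eq_bigr do rewrite big_seq_cond mulr_sumr.
rewrite exchange_big /=; apply: eq_bigr => t /andP [tts St].
rewrite mulrC -mulrBl g_qequiv ?ideal_h // mulr_suml.
by apply: eq_bigr => p _; rewrite mulrAC -mulrA.
Qed.
End QEquivalence.

Section Regularity.
Variables (R : realType) (d : Order.disp_t) (P : finPOrderType d).
Variables (f : {set P} -> R) (c : {fraction {poly R}}) (cp : P -> {fraction {poly R}}).
Hypothesis f_qequiv :
  forall I, order_ideal I -> ((f I)%:P)%:F - c = \sum_(p : P) cp p * Tq R p I.
Variables (x : R).
Hypothesis x_gt0 : 0 < x.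

Lemma qequiv_const_eval :
  frac_eval c x ((\sum_(I : {set P} | order_ideal I) wt R I * (f I)%:P).[x] /
                 (\sum_(I : {set P} | order_ideal I) wt R I).[x]).
Proof.
apply: frac_eval_divr.
  by rewrite gt_eqF // (horner_sum_wt_gt0 x_gt0 (@order_ideal_setT _ P)).
have sum_eq0 p : \sum_(I : {set P} | order_ideal I) (wt R I)%:F * Tq R p I = 0.
  by rewrite -[RHS](@sum_wt_Tq_eq0 R _ _ p predT) //; apply: eq_bigl => I; rewrite andbT.
have := qequiv_weighted_sum f_qequiv (ts := index_enum _) (S := @order_ideal _ P) (h := id)
  (fun I => (wt R I)%:F) (fun I _ => id).
rewrite /id [X in _ = X](eq_bigr (fun=> 0)) => [|p _]; last by rewrite sum_eq0 mulr0.
rewrite big1_eq => /eqP; rewrite subr_eq0 => /eqP cW.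
rewrite rmorph_sum -cW; under eq_bigr do rewrite -rmorphM.
by rewrite -rmorph_sum; exact: frac_eval_poly.
Qed.

Lemma qequiv_coef_regular p : exists v, frac_eval (cp p) x v.
Proof.
pose S I := order_ideal I && (p \notin I).
have idS : {in index_enum {set P}, forall I, S I -> order_ideal I} by move=> I _ /andP [].
have := qequiv_weighted_sum f_qequiv (h := fun I => I) (fun I => (wt R I)%:F) idS.
rewrite (bigD1 p) //= [X in _ = _ + X]big1 => [|q qp]; last first.
  rewrite (@sum_wt_Tq_eq0 R _ _ q (fun I => p \notin I)) ?mulr0 // => I _.
  by rewrite !inE negb_or eq_sym qp.
rewrite addr0 sum_wt_Tq_notin => cpE.
have A_gt0 : 0 < (\sum_(I | order_ideal I && Tplus p I) wt R I).[x].
  apply: (horner_sum_wt_gt0 (I0 := [set y | (y < p)%O])) => //.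
  rewrite /Tplus !inE ltxx /=; apply/andP; split.
    by apply/order_idealP => y z; rewrite !inE => yp zy; exact: le_lt_trans zy yp.
  by apply/forallP => y; rewrite !inE; apply/implyP.
eexists; apply: frac_eval_divr; first exact: lt0r_neq0 A_gt0.
rewrite -cpE; apply: frac_evalD; last apply/frac_evalN/frac_evalM.
- by apply: frac_eval_sum => I _; apply: frac_evalM; exact: frac_eval_poly.
- exact: qequiv_const_eval.
- by apply: frac_eval_sum => I _; exact: frac_eval_poly.
Qed.

Lemma qequiv_balanced_mean (O : seq {set P}) :
  all (@order_ideal _ P) O -> (0 < size O)%N ->
  (forall p, (count (Tplus p) O)%:R = x * (count (Tminus p) O)%:R) ->
  frac_eval c x ((\sum_(I <- O) f I) / (size O)%:R).
Proof.
move=> idO O_gt0 balanced.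
have := qequiv_weighted_sum f_qequiv (ts := O) (S := fun=> true) (h := fun I => I)
  (fun=> 1) (fun I IO _ => allP idO I IO) => /=.
under [X in _ = X]eq_bigr do rewrite (eq_bigr _ (fun I _ => mul1r _)) sum_Tq_count.
under eq_bigr do rewrite mul1r.
have sizeE : \sum_(I <- O) (1 : {fraction {poly R}}) = ((size O)%:R%:P)%:F.
  by rewrite polyC_natr rmorph_nat -sum1_size natr_sum.
rewrite sizeE => cnE.
suff : frac_eval c x ((\sum_(I <- O) f I - 0) / ((size O)%:R%:P).[x]).
  by rewrite subr0 hornerC.
apply: frac_eval_divr; first by rewrite hornerC pnatr_eq0 -lt0n.
move/eqP: cnE; rewrite subr_eq addrC -subr_eq => /eqP <-.
apply/frac_evalD/frac_evalN.
  by apply: frac_eval_sum => I _; have := frac_eval_poly x (f I)%:P; rewrite hornerC.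
rewrite -(big1_eq (index_enum P) xpredT : \sum_(p : P) 0 = 0 :> R).
apply: frac_eval_sum => p _.
have [vp cp_vp] := qequiv_coef_regular p.
rewrite -(mulr0 vp); apply: (frac_evalM cp_vp).
have := frac_eval_poly x ((count (Tplus p) O)%:R - 'X * (count (Tminus p) O)%:R).
by rewrite -!polyC_natr !hornerE balanced subrr.
Qed.
End Regularity.

Theorem proposition5p7 (R : realType) (d : Order.disp_t) (P : finPOrderType d)
    (f : {set P} -> R) (c : {fraction {poly R}}) :
  qequiv (fun I => ((f I)%:P)%:F) c ->
  forall (r s : nat), (0 < r)%N -> (0 < s)%N ->
  forall theta : {perm Lab s r}, full_cycle theta ->
  forall ext : seq P, linear_extension ext ->
  exists v : R,
    frac_eval c (r%:R / s%:R) v /\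
    mesic (@rs_labeling d P s r) (qrowmotion theta ext)
          (fun L => f (zeroset L)) v.
Proof.
move=> [cp f_qequiv] r s r_gt0 s_gt0 theta theta_cycle ext lin_ext.
have s_neq0 : s%:R != 0 :> R by rewrite pnatr_eq0 -lt0n.
have x_gt0 : 0 < r%:R / s%:R :> R by rewrite divr_gt0 ?ltr0n.
have c_x := qequiv_const_eval f_qequiv x_gt0.
eexists; split; first exact: c_x.
move=> L rsL; set O := fingraph.orbit _ L.
rewrite -(big_map (@zeroset d P s r) predT f) -(size_map (@zeroset d P s r)).
apply: frac_eval_unique (qequiv_balanced_mean f_qequiv x_gt0 _ _ _) c_x.
- apply/allP => _ /mapP [L' /trajectP [i _ ->] ->]; exact: rs_iter_qrowmotion.
- by rewrite size_map size_orbit fingraph.order_gt0.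
- move=> p; rewrite !count_map; apply: (mulfI s_neq0).
  rewrite mulrA [s%:R * (_ / _)]mulrC divfK // -!natrM.
  by congr _%:R; exact: qrowmotion_orbit_balance.
Qed.
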